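(* Let $\mathbb{A}\subseteq 2^\omega\times E^{[\infty]}$ be analytic, $P\subseteq 2^\omega$ a nonempty perfect set, and $X\in E^{[\infty]}$. If for every $f\in P$ player I has a strategy in $F[X]$ for playing out of $\mathbb{A}_f=\{Y:(f,Y)\in\mathbb{A}\}$, then there are a nonempty perfect $Q\subseteq P$ and a strategy $\sigma$ for I in $F[X]$ such that $Q\times[\sigma]\subseteq(2^\omega\times E^{[\infty]})\setminus\mathbb{A}$.
   Context: $F$ is a countable field and $E$ a countably infinite-dimensional $F$-vector space with fixed basis $(e_n)$; $\mathrm{supp}(v)$ is the set of indices of nonzero coefficients of $v\ne0$. A block sequence is a sequence $(x_n)$ of nonzero vectors with $\max\mathrm{supp}(x_n)<\min\mathrm{supp}(x_{n+1})$; $E^{[\infty]}$ is the Polish space of infinite block sequences (subspace of $E^\omega$, $E$ discrete). $\langle X\rangle$ is the span of $X$. The asymptotic game $F[X]$: I plays natural numbers $n_k$, II responds with nonzero $y_k\in\langle X\rangle$ with $n_k<\min\mathrm{supp}(y_k)$, II's moves forming a block sequence $(y_k)$, the outcome. A strategy for I is a function from finite sequences of II's previous moves to natural numbers; I plays out of a set $\mathbb{B}$ with a strategy if all outcomes of plays following it lie outside $\mathbb{B}$; $[\sigma]$ is the set of outcomes of plays in which I follows $\sigma$. *)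

From HB Require Import structures.
From mathcomp Require Import all_boot all_order all_algebra.
Set Implicit Arguments. Unset Strict Implicit. Unset Printing Implicit Defensive.
Import GRing.Theory.
Local Open Scope ring_scope.

(* E is modelled as {poly F}: finitely supported coefficient sequences,
   basis e_n = 'X^n, coefficient of e_n in v is v`_n. *)

Section Defs.
Variable F : countFieldType.
Local Notation E := {poly F}.

(* n < min supp(y)  (y nonzero is required separately) *)
Definition above (n : nat) (y : E) : Prop := forall i, (i <= n)%N -> y`_i = 0.

Definition supp_lt (x y : E) : Prop :=
  forall i j, x`_i != 0 -> y`_j != 0 -> (i < j)%N.

Definition block_seq (x : nat -> E) : Prop :=
  forall n, x n != 0 /\ supp_lt (x n) (x n.+1).

Definition in_span (X : nat -> E) (y : E) : Prop :=
  exists s : seq F, y = \sum_(i < size s) s`_i *: X i.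

Definition strategyI := seq E -> nat.

Definition outcomes (X : nat -> E) (sigma : strategyI) (Y : nat -> E) : Prop :=
  block_seq Y /\
  forall k, in_span X (Y k) /\ above (sigma (mkseq Y k)) (Y k).

Definition plays_out_of (X : nat -> E) (sigma : strategyI) (B : (nat -> E) -> Prop) :=
  forall Y, outcomes X sigma Y -> ~ B Y.
End Defs.

(* topology of 2^omega, omega^omega, E^omega: products of discrete spaces *)
Definition agree {T : Type} (n : nat) (x y : nat -> T) : Prop :=
  forall i, (i < n)%N -> x i = y i.

Definition continuous_baire {T U : Type} (g : (nat -> nat) -> (nat -> T) * (nat -> U)) :=
  forall x n, exists m, forall x', agree m x' x ->
    agree n (g x').1 (g x).1 /\ agree n (g x').2 (g x).2.

Definition analytic {T U : Type} (A : (nat -> T) * (nat -> U) -> Prop) : Prop :=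
  (forall p, ~ A p) \/
  exists g : (nat -> nat) -> (nat -> T) * (nat -> U),
    continuous_baire g /\ forall p, A p <-> exists x, g x = p.

Definition closed_cantor (P : (nat -> bool) -> Prop) : Prop :=
  forall f, (forall n, exists g, P g /\ agree n g f) -> P f.
Definition perfect_cantor (P : (nat -> bool) -> Prop) : Prop :=
  closed_cantor P /\
  forall f, P f -> forall n, exists g, P g /\ g <> f /\ agree n g f.

From mathcomp Require Import all_boot all_order all_algebra.
From mathcomp Require Import zify.
From Stdlib Require Import ClassicalEpsilon Classical FunctionalExtensionality.
From Stdlib Require Cantor.
Set Implicit Arguments. Unset Strict Implicit. Unset Printing Implicit Defensive.

(* Write A = g[omega^omega] with g continuous.  The argument tracks positions
   (Q, p, t): a perfect set Q of parameters, the moves p of II so far, and the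
   part t of a witness x in omega^omega revealed so far.  I kills a position if
   some strategy keeps g x outside Q * {plays extending p} for every x revealing
   t, and a position is bad if no perfect subset of it can be killed.  If the
   theorem failed, the root position (P, [], []) would be bad.

   From a bad position II has a well-founded strategy tree that, against any
   challenge of I and any perfect shrinking, reaches a bad position with a
   longer revealed part: otherwise a fusion of perfect sets combines I's
   countably many blocking moves and killing strategies into one strategy that
   kills a perfect subset.  Dovetailing all challenges at all nodes of these
   trees while the perfect sets shrink to one parameter f0 in P gives, against
   every strategy of I, a play Y whose revealed parts grow to some x; by
   continuity g x = (f0, Y), contradicting the hypothesis at f0. *)

Definition cset := (nat -> bool) -> Prop.
Definition subc (A B : cset) := forall f, A f -> B f.
Notation "A `<=` B" := (subc A B) (at level 70, no associativity).

Definition ball (h : nat -> bool) (m : nat) : cset := fun f => agree m f h.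
Definition cyl (Q : cset) (h : nat -> bool) (m : nat) : cset := fun f => Q f /\ ball h m f.
Definition nonempty_perfect (Q : cset) := perfect_cantor Q /\ exists f, Q f.
Definition perfect_sub (Q R : cset) := Q `<=` R /\ nonempty_perfect Q.
Definition nbhd (Q S : cset) (f : nat -> bool) := exists m, cyl Q f m `<=` S.

Lemma agree_sym T m (x y : nat -> T) : agree m x y -> agree m y x.
Proof. by move=> H i /H ->. Qed.

Lemma agree_trans T m (x y z : nat -> T) : agree m x y -> agree m y z -> agree m x z.
Proof. by move=> Hxy Hyz i Hi; rewrite Hxy // Hyz. Qed.

Lemma agree_le T m n (x y : nat -> T) : m <= n -> agree n x y -> agree m x y.
Proof. by move=> Hmn H i Hi; apply: H; apply: leq_trans Hmn. Qed.

Lemma subc_trans A B C : A `<=` B -> B `<=` C -> A `<=` C.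
Proof. by move=> HAB HBC f /HAB /HBC. Qed.

Lemma perfect_sub_refl Q : nonempty_perfect Q -> perfect_sub Q Q.
Proof. by split. Qed.

Lemma perfect_sub_trans Q R S : perfect_sub Q R -> R `<=` S -> perfect_sub Q S.
Proof. by move=> [HQR HQ] HRS; split => //; apply: subc_trans HRS. Qed.

Lemma nonempty_perfect_cyl Q h m : nonempty_perfect Q -> Q h -> nonempty_perfect (cyl Q h m).
Proof.
move=> [[Qclosed Qperf] _] Qh; split; last by exists h; split.
split.
- move=> f Hf; split.
    by apply: Qclosed => n; have [g [[Qg _] Hg]] := Hf n; exists g.
  have [g [[_ Hgh] Hgf]] := Hf m.
  exact: agree_trans (agree_sym Hgf) Hgh.
- move=> f [Qf Hfh] n; have [g [Qg [Hgf Hag]]] := Qperf f Qf (maxn n m).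
  exists g; split; last split => //.
    by split => //; apply: agree_trans Hfh; apply: agree_le Hag; exact: leq_maxr.
  by apply: agree_le Hag; exact: leq_maxl.
Qed.

Lemma nbhd_meet Q S1 S2 f : nonempty_perfect Q -> Q f -> nbhd Q S1 f -> nbhd Q S2 f ->
  exists2 Q', perfect_sub Q' S1 & Q' `<=` S2.
Proof.
move=> HQ Qf [m1 H1] [m2 H2]; exists (cyl Q f (maxn m1 m2)).
  split; last exact: nonempty_perfect_cyl.
  by move=> h [Qh Hh]; apply: H1; split => //; apply: agree_le Hh; exact: leq_maxl.
by move=> h [Qh Hh]; apply: H2; split => //; apply: agree_le Hh; exact: leq_maxr.
Qed.

Lemma leq_max_tuple (T : finType) (G : seq T -> nat) n s :
  size s = n -> G s <= \max_(t : n.-tuple T) G t.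
Proof. by move=> <-; exact: (@leq_bigmax _ (fun t : (size s).-tuple T => G t) (in_tuple s)). Qed.

Section Fusion.
Variables (Q0 : cset) (K : nat -> cset -> Prop).
Hypothesis Q0_perfect : nonempty_perfect Q0.
Hypothesis K_dense : forall i L, perfect_sub L Q0 -> exists L', perfect_sub L' L /\ K i L'.

Definition refine (i : nat) (R : cset) : cset :=
  epsilon (inhabits (fun _ => False)) (fun L => perfect_sub L R /\ K i L).

Definition split_pair (R : cset) : (nat -> bool) * (nat -> bool) :=
  epsilon (inhabits (xpred0, xpred0)) (fun fs => [/\ R fs.1, R fs.2 & fs.1 <> fs.2]).

Definition split_index (R : cset) : nat :=
  epsilon (inhabits 0) (fun d => (split_pair R).1 d <> (split_pair R).2 d).

Lemma split_pairP R : nonempty_perfect R ->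
  [/\ R (split_pair R).1, R (split_pair R).2 &
      (split_pair R).1 (split_index R) <> (split_pair R).2 (split_index R)].
Proof.
move=> [[_ Rperf] [f Rf]].
have [Rf1 Rf2 f12] :
    [/\ R (split_pair R).1, R (split_pair R).2 & (split_pair R).1 <> (split_pair R).2].
  apply: (epsilon_spec (inhabits (xpred0, xpred0)) (fun fs => [/\ R fs.1, R fs.2 & fs.1 <> fs.2])).
  by have [g [Rg [gf _]]] := Rperf f Rf 0; exists (f, g); split => //= fg; apply: gf.
split => //; apply: (epsilon_spec (inhabits 0) (fun d => _ d <> _ d)).
apply: NNPP => Hall; apply: f12; apply: functional_extensionality => d.
by apply: NNPP => Hd; apply: Hall; exists d.
Qed.

(* The piece of [b :: s] is a ball around one of two points of the refinement of
   the piece of [s] that differ at [split_index]: pieces of one level are disjoint. *)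
Fixpoint fnode (s : seq bool) : (nat -> bool) * nat * cset :=
  if s is b :: s' then
    let R := refine (size s') (fnode s').2 in
    let c := if b then (split_pair R).2 else (split_pair R).1 in
    (c, (split_index R).+1, cyl R c (split_index R).+1)
  else (xpred0, 0, Q0).

Definition fcenter s := (fnode s).1.1.
Definition flen s := (fnode s).1.2.
Definition fpiece s := (fnode s).2.
Definition frefined s := refine (size s) (fpiece s).

Definition fnode_inv s := [/\ nonempty_perfect (fpiece s), fpiece s `<=` Q0,
  fpiece s `<=` ball (fcenter s) (flen s) & size s <= flen s].

Lemma frefinedP s : fnode_inv s -> perfect_sub (frefined s) (fpiece s) /\ K (size s) (frefined s).
Proof.
move=> [Hperf HQ0 _ _].
apply: (epsilon_spec (inhabits (fun _ => False)) (fun L => perfect_sub L _ /\ K _ L)).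
exact: K_dense.
Qed.

Lemma fnode_inv_cons b s : fnode_inv s ->
  [/\ fnode_inv (b :: s), fpiece (b :: s) `<=` frefined s,
      frefined s (fcenter (b :: s)) & flen s < flen (b :: s)].
Proof.
move=> Hs; have [[Rsub Rperf] _] := frefinedP Hs.
have [Rf1 Rf2 f12] := split_pairP Rperf.
have [_ HQ0 Hball Hsize] := Hs.
have Hc : frefined s (fcenter (b :: s)) by rewrite /fcenter /=; case: b.
have Hlen : flen s <= split_index (frefined s).
  rewrite leqNgt; apply/negP => Hlt; apply: f12.
  by rewrite (Hball _ (Rsub _ Rf1)) // (Hball _ (Rsub _ Rf2)).
split => //.
- split; first exact: nonempty_perfect_cyl.
  + by move=> f [/Rsub /HQ0].
  + by move=> f [].
  + by rewrite /= ltnS; apply: leq_trans Hlen.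
- by move=> f [].
Qed.

Lemma fnode_invP s : fnode_inv s.
Proof.
elim: s => [|b s IH]; last by case: (fnode_inv_cons b IH).
by split => //; rewrite /fpiece /=.
Qed.

Lemma fpiece_cons b s : fpiece (b :: s) `<=` fpiece s.
Proof.
have [_ Hsub _ _] := fnode_inv_cons b (fnode_invP s).
by move=> f /Hsub; have [[Rsub _] _] := frefinedP (fnode_invP s); apply: Rsub.
Qed.

Lemma fcenter_in b s : fpiece (b :: s) (fcenter (b :: s)).
Proof. by have [_ _ Hc _] := fnode_inv_cons b (fnode_invP s); split. Qed.

Lemma fpiece_ball s : fpiece s `<=` ball (fcenter s) (flen s).
Proof. by case: (fnode_invP s). Qed.

Lemma fball_cons b s : ball (fcenter (b :: s)) (flen (b :: s)) `<=` ball (fcenter s) (flen s).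
Proof.
have [_ _ Hc Hlen] := fnode_inv_cons b (fnode_invP s).
have [[Rsub _] _] := frefinedP (fnode_invP s).
move=> f Hf; apply: agree_trans (fpiece_ball (Rsub _ Hc)).
exact: agree_le (ltnW Hlen) Hf.
Qed.

Lemma fball_siblings s f :
  ball (fcenter (true :: s)) (flen (true :: s)) f ->
  ball (fcenter (false :: s)) (flen (false :: s)) f -> False.
Proof.
have [[_ Rperf] _] := frefinedP (fnode_invP s).
have [_ _ f12] := split_pairP Rperf.
move=> Htrue Hfalse; apply: f12.
have := Htrue (split_index (frefined s)) (ltnSn _).
by have := Hfalse (split_index (frefined s)) (ltnSn _); rewrite /fcenter /= => <- <-.
Qed.

Lemma fball_uniq s1 s2 f : size s1 = size s2 ->
  ball (fcenter s1) (flen s1) f -> ball (fcenter s2) (flen s2) f -> s1 = s2.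
Proof.
elim: s1 s2 => [|b1 s1 IH] [|b2 s2] // [Hsize] H1 H2.
have Es := IH s2 Hsize (fball_cons H1) (fball_cons H2); subst s2.
by case: b1 b2 H1 H2 => [] [] // H1 H2; exfalso;
  [exact: fball_siblings H1 H2 | exact: fball_siblings H2 H1].
Qed.

Lemma fpiece_uniq s1 s2 f : size s1 = size s2 -> fpiece s1 f -> fpiece s2 f -> s1 = s2.
Proof. by move=> Hsize /fpiece_ball H1 /fpiece_ball H2; exact: fball_uniq Hsize H1 H2. Qed.

Definition fusion_set : cset := fun f => forall n, exists2 s, size s = n & fpiece s f.

Lemma fusion_set_branch (u : nat -> seq bool) : u 0 = [::] ->
  (forall n, exists b, u n.+1 = b :: u n) ->
  let f := fun k => fcenter (u k.+1) k in fusion_set f /\ forall n, fpiece (u n) f.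
Proof.
move=> Hu0 Hu f.
have Hsize n : size (u n) = n.
  by elim: n => [|n IH]; [rewrite Hu0 | have [b ->] := Hu n; rewrite /= IH].
have Hnest m n : m <= n -> fpiece (u n) `<=` fpiece (u m).
  move/subnKC <-; elim: (n - m) => [|d IH]; first by rewrite addn0.
  by rewrite addnS; have [b ->] := Hu (m + d); apply: subc_trans IH; exact: fpiece_cons.
have Hcenter n : fpiece (u n.+1) (fcenter (u n.+1)) by have [b ->] := Hu n; exact: fcenter_in.
suff Hf n : fpiece (u n) f by split => // n; exists (u n).
have [[[Hclosed _] _] _ _ _] := fnode_invP (u n).
apply: Hclosed => m; exists (fcenter (u (maxn n m).+1)); split.
  by apply: (Hnest n (maxn n m).+1); [lia | exact: Hcenter].
move=> k Hk; apply: (fpiece_ball (Hnest k.+1 (maxn n m).+1 _ _ (Hcenter _))); first lia.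
by case: (fnode_invP (u k.+1)); rewrite Hsize.
Qed.

Lemma fusion_set_meets s : exists f, fusion_set f /\ fpiece s f.
Proof.
pose u n := if n <= size s then drop (size s - n) s else nseq (n - size s) false ++ s.
have Hu n : exists b, u n.+1 = b :: u n.
  rewrite /u; case: (ltngtP n (size s)) => [Hn|Hn|->].
  - by exists (nth false s (size s - n.+1)); rewrite -(subnSK Hn) -drop_nth //; lia.
  - by rewrite subSn ?(ltnW Hn) //; exists false.
  - by rewrite subSnn subnn drop0; exists false.
have Hu0 : u 0 = [::] by rewrite /u subn0 drop_size.
have [Hf Hpieces] := fusion_set_branch Hu0 Hu.
by eexists; split; [exact: Hf | have := Hpieces (size s); rewrite /u leqnn subnn drop0].
Qed.

Lemma fusion_set_closed : closed_cantor fusion_set.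
Proof.
move=> f Hf n; pose M := \max_(t : n.-tuple bool) flen t.
have [g [Hg Hgf]] := Hf M; have [s Hs Hgs] := Hg n.
exists s => //.
have Hfs : ball (fcenter s) (flen s) f.
  apply: agree_trans (agree_sym (agree_le _ Hgf)) (fpiece_ball Hgs).
  exact: leq_max_tuple.
have [[[Hclosed _] _] _ _ _] := fnode_invP s.
apply: Hclosed => m; have [g' [Hg' Hg'f]] := Hf (maxn m M); have [s' Hs' Hg's'] := Hg' n.
exists g'; split; last by apply: agree_le Hg'f; exact: leq_maxl.
suff <- : s' = s by [].
apply: (fball_uniq (f := f)) _ _ Hfs; first by rewrite Hs Hs'.
apply: agree_trans (agree_sym (agree_le _ Hg'f)) (fpiece_ball Hg's').
exact: leq_trans (leq_max_tuple _ Hs') (leq_maxr _ _).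
Qed.

Lemma fusion_set_perfect : perfect_cantor fusion_set.
Proof.
split; first exact: fusion_set_closed.
move=> f Hf m; have [[|b s] //= [Hs] Hfs] := Hf m.+1.
have [g [Hg Hgs]] := fusion_set_meets (~~ b :: s).
exists g; split => //; split.
  move=> Egf; subst g; have := fpiece_uniq (s1 := b :: s) (s2 := ~~ b :: s) erefl Hfs Hgs.
  by case; case: b {Hfs Hgs}.
have [_ _ _ Hlen] := fnode_invP s.
apply: agree_le (agree_trans (fpiece_ball (fpiece_cons Hgs)) _); first by rewrite -Hs.
exact: agree_sym (fpiece_ball (fpiece_cons Hfs)).
Qed.

Lemma fusion_set_refines i f :
  fusion_set f -> exists2 s, size s = i & nbhd fusion_set (frefined s) f.
Proof.
move=> Hf; have [[|b s] //= [Hs] Hfs] := Hf i.+1.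
exists s => //; exists (flen (b :: s)) => h [Hh Hhf].
have [s' Hs' Hhs'] := Hh i.+1.
have Es' : s' = b :: s.
  apply: (fball_uniq (f := h)) (fpiece_ball Hhs') _; first by rewrite Hs' /= Hs.
  exact: agree_trans Hhf (fpiece_ball Hfs).
have [_ Hsub _ _] := fnode_inv_cons b (fnode_invP s).
by apply: Hsub; rewrite -Es'.
Qed.

End Fusion.

Lemma fusion (Q0 : cset) (K : nat -> cset -> Prop) : nonempty_perfect Q0 ->
  (forall i L, perfect_sub L Q0 -> exists L', perfect_sub L' L /\ K i L') ->
  exists (Q : cset) (L : seq bool -> cset), perfect_sub Q Q0 /\
    (forall s, K (size s) (L s)) /\
    forall i f, Q f -> exists2 s, size s = i & nbhd Q (L s) f.
Proof.
move=> HQ0 HK; exists (fusion_set Q0 K), (frefined Q0 K); split; last split.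
- split; first by move=> f /(_ 0) [[|]].
  split; first exact: fusion_set_perfect.
  by have [f [Hf _]] := fusion_set_meets HQ0 HK [::]; exists f.
- by move=> s; case: (frefinedP HK (fnode_invP HQ0 HK s)).
- by move=> i f; exact: fusion_set_refines.
Qed.

Lemma take_mkseq T (f : nat -> T) m n : take m (mkseq f n) = mkseq f (minn m n).
Proof. by rewrite /mkseq -map_take take_iota. Qed.

Lemma prefix_mkseq (T : eqType) (f : nat -> T) m n : m <= n -> prefix (mkseq f m) (mkseq f n).
Proof. by move=> Hmn; rewrite prefixE size_mkseq take_mkseq (minn_idPl Hmn). Qed.

(* [reveal x k] is the longest prefix of [x] of length at most [k] whose entries are
   at most [k]: it takes finitely many values at round [k], and it grows to [x]. *)
Definition rlen (x : nat -> nat) (k : nat) := find (fun d => k < d) (mkseq x k).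
Definition reveal (x : nat -> nat) (k : nat) := mkseq x (rlen x k).

Definition max_reveal (k : nat) (G : seq nat -> nat) : nat :=
  \max_(l < k.+1) \max_(u : l.-tuple 'I_k.+1) G (map val u).

Section Reveal.
Variable x : nat -> nat.

Lemma rlen_le k : rlen x k <= k.
Proof. by rewrite /rlen; apply: leq_trans (find_size _ _) _; rewrite size_mkseq. Qed.

Lemma rlen_small k i : i < rlen x k -> x i <= k.
Proof.
move=> Hi; have := before_find 0 Hi.
by rewrite nth_mkseq ?(leq_trans Hi (rlen_le k)) // => /negbT; rewrite -leqNgt.
Qed.

Lemma rlen_big k : rlen x k < k -> k < x (rlen x k).
Proof.
move=> Hlt; have Hhas : has (fun d => k < d) (mkseq x k) by rewrite has_find size_mkseq.
by have := nth_find 0 Hhas; rewrite nth_mkseq.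
Qed.

Lemma rlen_mono a b : a <= b -> rlen x a <= rlen x b.
Proof.
move=> Hab; rewrite leqNgt; apply/negP => Hlt.
have := rlen_big (leq_trans Hlt (leq_trans (rlen_le a) Hab)).
by have := rlen_small Hlt; lia.
Qed.

Lemma rlen_unbounded m : m <= rlen x (maxn m (\max_(i < m) x i)).
Proof.
set k := maxn _ _; rewrite leqNgt; apply/negP => Hlt.
have := rlen_big (leq_trans Hlt (leq_maxl _ _)).
have := @leq_bigmax _ (fun i : 'I_m => x i) (Ordinal Hlt).
by have := leq_maxr m (\max_(i < m) x i); rewrite -/k /=; lia.
Qed.

Lemma reveal0 : reveal x 0 = [::].
Proof. by rewrite /reveal; case: (rlen x 0) (rlen_le 0). Qed.

Lemma size_reveal k : size (reveal x k) = rlen x k.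
Proof. exact: size_mkseq. Qed.

Lemma nth_reveal k i : i < rlen x k -> nth 0 (reveal x k) i = x i.
Proof. exact: nth_mkseq. Qed.

Lemma reveal_prefix a b : a <= b -> prefix (reveal x a) (reveal x b).
Proof. by move=> Hab; apply: prefix_mkseq; apply: rlen_mono. Qed.

Lemma reveal_changes t m : exists2 k, m < k & reveal x k != t.
Proof.
set k0 := maxn (size t).+1 (\max_(i < (size t).+1) x i).
exists (maxn k0 m.+1); first exact: leq_maxr.
apply/eqP => Ht.
have H1 := rlen_unbounded (size t).+1; rewrite -/k0 in H1.
have H2 := rlen_mono (leq_maxl k0 m.+1).
have H3 : rlen x (maxn k0 m.+1) = size t by rewrite -size_reveal Ht.
lia.
Qed.

Lemma leq_max_reveal k G : G (reveal x k) <= max_reveal k G.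
Proof.
have Hl : rlen x k < k.+1 by rewrite ltnS rlen_le.
apply: (bigmax_sup (Ordinal Hl)) => //=.
have -> : reveal x k = map val (map (@inord k) (reveal x k)).
  rewrite -map_comp -[LHS]map_id; apply/eq_in_map => i /mapP [j].
  rewrite mem_iota add0n => /andP [_ Hj] -> /=; rewrite inordK // ltnS.
  exact: rlen_small.
by apply: (leq_max_tuple (fun u => G (map val u))); rewrite size_map size_reveal.
Qed.

End Reveal.

Definition inhabitant (A : Type) (H : inhabited A) : A := epsilon H (fun _ => True).

Lemma above_mono (F : countFieldType) m n (y : {poly F}) : m <= n -> above n y -> above m y.
Proof. by move=> Hmn H i Hi; apply: H; apply: leq_trans Hmn. Qed.

Section Positions.
Variable F : countFieldType.
Local Notation E := {poly F}.
Variables (X : nat -> E) (g : (nat -> nat) -> (nat -> bool) * (nat -> E)).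

Definition legal (p : seq E) (y : E) :=
  [/\ y != 0%R, in_span X y & 0 < size p -> supp_lt (last 0%R p) y].

Definition outcome_from (sg : strategyI F) (p : seq E) (Y : nat -> E) :=
  [/\ mkseq Y (size p) = p, block_seq Y, forall k, in_span X (Y k)
    & forall k, size p <= k -> above (sg (mkseq Y k)) (Y k)].

Definition kills (sg : strategyI F) (Q : cset) (p : seq E) (t : seq nat) :=
  forall f Y x, Q f -> outcome_from sg p Y -> reveal x (size p) = t -> g x <> (f, Y).

Definition bad (Q : cset) (p : seq E) (t : seq nat) :=
  forall Q' sg, perfect_sub Q' Q -> ~ kills sg Q' p t.

(* Since the type is inductive, along any run the
   code can stay unchanged only finitely often. *)
Inductive escape (Q : cset) (p : seq E) (t : seq nat) : Type :=
  Escape (move : cset -> nat -> E) (code : cset -> nat -> seq nat) (shrink : cset -> nat -> cset)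
    (Hmove : forall Q' n, perfect_sub Q' Q ->
       [/\ legal p (move Q' n), above n (move Q' n), prefix t (code Q' n),
           perfect_sub (shrink Q' n) Q' &
           code Q' n <> t -> bad (shrink Q' n) (rcons p (move Q' n)) (code Q' n)])
    (Hnext : forall Q' n (HQ' : perfect_sub Q' Q), code Q' n = t ->
       escape (shrink Q' n) (rcons p (move Q' n)) t).

Definition blocks (Q : cset) (p : seq E) (t : seq nat) (n : nat) :=
  forall y t' Q', legal p y -> above n y -> prefix t t' -> perfect_sub Q' Q ->
    if t' == t then ~ inhabited (escape Q' (rcons p y) t) else ~ bad Q' (rcons p y) t'.

Lemma bad_sub Q Q' p t : Q' `<=` Q -> bad Q p t -> bad Q' p t.
Proof. by move=> HQ Hbad Q'' sg HQ''; apply: Hbad; exact: perfect_sub_trans HQ'' HQ. Qed.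

Lemma escape_sub Q Q' p t : Q' `<=` Q -> inhabited (escape Q p t) -> inhabited (escape Q' p t).
Proof.
move=> HQ [[move code shrink Hmove Hnext]]; constructor.
exact: (Escape (fun Q'' n HQ'' => Hmove Q'' n (perfect_sub_trans HQ'' HQ))
               (fun Q'' n HQ'' => Hnext Q'' n (perfect_sub_trans HQ'' HQ))).
Qed.

Lemma blocks_sub Q Q' p t n : Q' `<=` Q -> blocks Q p t n -> blocks Q' p t n.
Proof.
by move=> HQ Hblock y t' Q'' Hy Hn Ht HQ''; apply: Hblock => //; exact: perfect_sub_trans HQ'' HQ.
Qed.

Lemma not_escape_blocks Q p t : ~ inhabited (escape Q p t) ->
  exists Q' n, perfect_sub Q' Q /\ blocks Q' p t n.
Proof.
move=> Hnesc; apply: NNPP => Hnblock; apply: Hnesc.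
pose answer Q' n (w : E * seq nat * cset) :=
  [/\ legal p w.1.1, above n w.1.1, prefix t w.1.2, perfect_sub w.2 Q' &
      if w.1.2 == t then inhabited (escape w.2 (rcons p w.1.1) t)
      else bad w.2 (rcons p w.1.1) w.1.2].
have Hanswer Q' n : perfect_sub Q' Q -> exists w, answer Q' n w.
  move=> HQ'; apply: NNPP => Hno; apply: Hnblock; exists Q', n; split => // y t' Q'' Hy Hn Ht HQ''.
  by case: ifP => Et Hw; apply: Hno; exists (y, t', Q''); split; rewrite //= Et.
pose w Q' n := epsilon (inhabits (0%R, [::], fun _ => False)) (answer Q' n).
have Hw Q' n (HQ' : perfect_sub Q' Q) : answer Q' n (w Q' n) := epsilon_spec _ _ (Hanswer Q' n HQ').
constructor; apply: (@Escape _ _ _ (fun Q' n => (w Q' n).1.1) (fun Q' n => (w Q' n).1.2)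
                                   (fun Q' n => (w Q' n).2)).
- move=> Q' n HQ'; have [? ? ? ? Hif] := Hw Q' n HQ'; split => // Hne.
  by move: Hif; case: eqP.
- move=> Q' n HQ' Et; have [_ _ _ _] := Hw Q' n HQ'; rewrite Et eqxx; exact: inhabitant.
Qed.

Lemma outcome_from_legal sg p Y j : outcome_from sg p Y -> legal (mkseq Y j) (Y j).
Proof.
case=> _ HY Hspan _; split; [by case: (HY j) | exact: Hspan |].
by case: j => // j _; rewrite mkseqS last_rcons; case: (HY j).
Qed.

Lemma outcome_from_shift sg sg' p Y k : outcome_from sg p Y -> size p <= k ->
  (forall k', k <= k' -> sg' (mkseq Y k') <= sg (mkseq Y k')) -> outcome_from sg' (mkseq Y k) Y.
Proof.
case=> _ HY Hspan Habove Hk Hsg; split => //; first by rewrite size_mkseq.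
move=> k'; rewrite size_mkseq => Hk'; apply: above_mono (Hsg _ Hk') _.
by apply: Habove; apply: leq_trans Hk'.
Qed.

Section FusedStrategy.
Variable t : seq nat.

(* The countably many questions the fused strategy has to settle, one per index [i]:
   at a position [r], can II still escape with code [t] (otherwise I has a blocking
   move), and is the position with code [t'] bad (otherwise I has a killing strategy)? *)
Definition probe (i : nat) (L : cset) : Prop :=
  match @unpickle (seq E * option (seq nat))%type i with
  | Some (r, None) => inhabited (escape L r t) \/ exists n, blocks L r t n
  | Some (r, Some t') => bad L r t' \/ exists sg, kills sg L r t'
  | None => True
  end.

Lemma probe_dense i L : nonempty_perfect L -> exists L', perfect_sub L' L /\ probe i L'.
Proof.
move=> /perfect_sub_refl HLL.
rewrite /probe; case: (unpickle i) => [[r [t'|]]|]; last by exists L.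
- case: (classic (bad L r t')) => Hbad; first by exists L; split => //; left.
  have [Q' [sg [HQ' Hkill]]] : exists Q' sg, perfect_sub Q' L /\ kills sg Q' r t'.
    by apply: NNPP => Hno; apply: Hbad => Q' sg HQ' Hkill; apply: Hno; exists Q', sg.
  by exists Q'; split => //; right; exists sg.
- case: (classic (inhabited (escape L r t))) => Hesc; first by exists L; split => //; left.
  have [Q' [n [HQ' Hblock]]] := not_escape_blocks Hesc.
  by exists Q'; split => //; right; exists n.
Qed.

Variables (p : seq E) (n0 : nat) (Qs : cset) (L : seq bool -> cset).
Hypothesis Qs_perfect : nonempty_perfect Qs.
Hypothesis L_probe : forall s, probe (size s) (L s).
Hypothesis L_cover : forall i f, Qs f -> exists2 s, size s = i & nbhd Qs (L s) f.
Hypothesis Qs_blocks : blocks Qs p t n0.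

Definition blocking_move (r : seq E) (Q : cset) : nat :=
  epsilon (inhabits 0) (fun n => blocks Q r t n).
Definition killing_strategy (r : seq E) (t' : seq nat) (Q : cset) : strategyI F :=
  epsilon (inhabits (fun _ => 0)) (fun sg => kills sg Q r t').

(* I plays above every blocking move for the current position and, for every earlier
   round [j], above every killing strategy for the position reached at round [j]; only
   finitely many pieces [L s] and revealed parts at round [j] are to be considered. *)
Definition fused_strategy : strategyI F := fun r =>
  maxn n0 (maxn (\max_(s : (pickle (r, @None (seq nat))).-tuple bool) blocking_move r (L s))
    (\max_(j < (size r).+1) max_reveal j (fun t' =>
       \max_(s : (pickle (take j r, Some t')).-tuple bool)
          killing_strategy (take j r) t' (L s) r))).

Section Run.
Variables (f : nat -> bool) (Y : nat -> E) (x : nat -> nat).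
Hypotheses (Hf : Qs f) (HY : outcome_from fused_strategy p Y).
Hypotheses (Hrev : reveal x (size p) = t) (Hgx : g x = (f, Y)).

Definition safe (j : nat) := exists2 S, nbhd Qs S f & forall Q', perfect_sub Q' S ->
  if reveal x j == t then ~ inhabited (escape Q' (mkseq Y j) t)
  else ~ bad Q' (mkseq Y j) (reveal x j).

Lemma safe_start : safe (size p).+1.
Proof.
have [Hp _ _ Habove] := HY.
exists Qs; first by exists 0 => h [].
move=> Q' HQ'; rewrite mkseqS Hp; apply: Qs_blocks => //.
- by rewrite -{1}Hp; exact: outcome_from_legal HY.
- by apply: above_mono (Habove _ (leqnn _)); exact: leq_maxl.
- by rewrite -Hrev; exact: reveal_prefix.
Qed.

Lemma safe_next j : size p < j -> reveal x j = t -> safe j -> safe j.+1.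
Proof.
move=> Hj Hrevj [S HS Hsafe]; rewrite Hrevj eqxx in Hsafe.
pose r := mkseq Y j; have [s Hs Hnbhd] := L_cover (pickle (r, @None (seq nat))) Hf.
have := L_probe s; rewrite Hs /probe pickleK => -[Hesc | Hblock].
  have [Q' HQ' HQ'L] := nbhd_meet Qs_perfect Hf HS Hnbhd.
  by case: (Hsafe Q' HQ'); apply: escape_sub Hesc.
have Hn := epsilon_spec (inhabits 0) (fun n => blocks (L s) r t n) Hblock.
exists (L s) => // Q' HQ'; rewrite mkseqS; apply: Hn => //.
- exact: outcome_from_legal HY.
- have [_ _ _ Habove] := HY; apply: above_mono (Habove _ (ltnW Hj)).
  apply: leq_trans _ (leq_maxr _ _); apply: leq_trans _ (leq_maxl _ _).
  by apply: (leq_max_tuple (fun s : seq bool => blocking_move r (L s))).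
- by rewrite -Hrevj; exact: reveal_prefix.
Qed.

Lemma safe_upto k : (forall j, size p < j < k -> reveal x j = t) ->
  forall j, size p < j <= k -> safe j.
Proof.
move=> Hrevt j /andP [Hpj Hjk]; rewrite -(subnKC Hpj) in Hjk *.
elim: (j - (size p).+1) Hjk => [|d IH] Hd; first by rewrite addn0; exact: safe_start.
by rewrite addnS in Hd *; apply: safe_next; [lia | apply: Hrevt; lia | apply: IH; lia].
Qed.

Lemma killing_strategy_followed k s : size p <= k ->
  size s = pickle (mkseq Y k, Some (reveal x k)) ->
  outcome_from (killing_strategy (mkseq Y k) (reveal x k) (L s)) (mkseq Y k) Y.
Proof.
move=> Hk Hs; apply: (outcome_from_shift HY Hk) => k' Hk'.
apply: leq_trans _ (leq_maxr _ _); apply: leq_trans _ (leq_maxr _ _).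
have Hkk' : k < (size (mkseq Y k')).+1 by rewrite size_mkseq ltnS.
apply: (bigmax_sup (Ordinal Hkk')) => //=; rewrite take_mkseq (minn_idPl Hk').
apply: leq_trans (leq_max_reveal x k _).
exact: (leq_max_tuple (fun s => killing_strategy (mkseq Y k) _ (L s) (mkseq Y k'))).
Qed.

Lemma run_contradiction : False.
Proof.
have [k0 Hk0 Hrev0] := reveal_changes x t (size p).
pose P k := (size p < k) && (reveal x k != t).
case: (ex_minnP (ex_intro P k0 (introT andP (conj Hk0 Hrev0)))) => k /andP [Hk Hrevk] Hmin.
have Hrevt j : size p < j < k -> reveal x j = t.
  case/andP=> Hpj Hjk; apply/eqP; apply: contraTT Hjk => Hne.
  by rewrite -leqNgt; apply: Hmin; rewrite /P Hpj.
have [S HS] := safe_upto Hrevt (introT andP (conj Hk (leqnn k))).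
rewrite (negbTE Hrevk) => Hsafe.
have [s Hs Hnbhd] := L_cover (pickle (mkseq Y k, Some (reveal x k))) Hf.
have := L_probe s; rewrite Hs /probe pickleK => -[Hbad | Hkill].
  have [Q' HQ' HQ'L] := nbhd_meet Qs_perfect Hf HS Hnbhd.
  by apply: (Hsafe Q' HQ'); apply: bad_sub HQ'L Hbad.
have Hks : kills (killing_strategy (mkseq Y k) (reveal x k) (L s)) (L s) (mkseq Y k) (reveal x k).
  exact: epsilon_spec _ _ Hkill.
apply: (Hks f Y x) => //.
- by have [m Hm] := Hnbhd; apply: Hm; split.
- exact: killing_strategy_followed (ltnW Hk) Hs.
- by rewrite size_mkseq.
Qed.
End Run.

Lemma fused_strategy_kills : kills fused_strategy Qs p t.
Proof. by move=> f Y x Hf HY Hrev Hgx; exact: run_contradiction Hf HY Hrev Hgx. Qed.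

End FusedStrategy.

Lemma bad_escape Q p t : bad Q p t -> inhabited (escape Q p t).
Proof.
move=> Hbad; apply: NNPP => Hnesc.
have [Q0 [n0 [[HQ0Q HQ0] Hblock0]]] := not_escape_blocks Hnesc.
have Hdense i L : perfect_sub L Q0 -> exists L', perfect_sub L' L /\ probe t i L'.
  by case=> _ HL; exact: probe_dense.
have [Qs [L [[HQsQ0 HQs] [Hprobe Hcover]]]] := fusion HQ0 Hdense.
apply: (Hbad Qs (fused_strategy t n0 L)); first by split => // f /HQsQ0 /HQ0Q.
exact: fused_strategy_kills Hprobe Hcover (blocks_sub HQsQ0 Hblock0).
Qed.
End Positions.

Lemma cantor_fst_le i : (Cantor.of_nat i).1 <= i.
Proof.
case E: (Cantor.of_nat i) => [a n] /=.
have := Cantor.to_nat_non_decreasing a n; rewrite -E Cantor.cancel_to_of => /leP; lia.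
Qed.

Lemma cantor_to_nat_ge a n : a <= Cantor.to_nat (a, n).
Proof. by have := Cantor.to_nat_non_decreasing a n => /leP; lia. Qed.

Section Defeat.
Variable F : countFieldType.
Local Notation E := {poly F}.
Variables (X : nat -> E) (g : (nat -> nat) -> (nat -> bool) * (nat -> E)) (P : cset).
Hypotheses (P_perfect : nonempty_perfect P) (g_cont : continuous_baire g).
Hypothesis P_bad : bad X g P [::] [::].

Lemma bad_witness Q Q' p t sg : bad X g Q p t -> perfect_sub Q' Q ->
  exists f Y x, [/\ Q' f, outcome_from X sg p Y, reveal x (size p) = t & g x = (f, Y)].
Proof.
move=> Hbad HQ'; apply: NNPP => Hno; apply: (Hbad Q' sg HQ') => f Y x Hf HY Hrev Hgx.
by apply: Hno; exists f, Y, x.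
Qed.

Record node := Node {
  nset : cset; npos : seq E; ncode : seq nat; ntree : escape X g nset npos ncode }.

Definition child (u v : node) : Prop :=
  match ntree u with Escape _ _ _ _ Hnext => exists Q' n HQ' e, v = Node (Hnext Q' n HQ' e) end.

Lemma no_infinite_descent (run : nat -> node) : ~ forall k, child (run k) (run k.+1).
Proof.
case E: (run 0) => [Q p t T].
elim: T run E => {}Q {}p {}t move code shrink Hmove Hnext IH run E Hrun.
have := Hrun 0; rewrite E /child /= => -[Q' [n [HQ' [e E1]]]].
exact: (IH Q' n HQ' e (fun k => run k.+1)).
Qed.

Definition answers (u : node) (n : nat) (v : node) := exists y,
  [/\ npos v = rcons (npos u) y, legal X (npos u) y, above n y, prefix (ncode u) (ncode v) &
      if ncode v == ncode u then child u v else bad X g (nset v) (npos v) (ncode v)].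

Lemma answer_exists u n R : perfect_sub R (nset u) ->
  exists v, answers u n v /\ perfect_sub (nset v) R.
Proof.
case: u => Q p t [move code shrink Hmove Hnext] /= HR.
have [Hlegal Hn Hprefix HQ' Hbad] := Hmove R n HR.
case: (eqVneq (code R n) t) => Ecode.
  exists (Node (Hnext R n HR Ecode)); split => //; exists (move R n); split => //=.
    exact: prefix_refl.
  by rewrite eqxx; exists R, n, HR, Ecode.
have Hne : code R n <> t by apply/eqP.
exists (Node (inhabitant (bad_escape (Hbad Hne)))); split => //.
by exists (move R n); split => //=; rewrite (negbTE Ecode); exact: Hbad.
Qed.

Definition root : node := Node (inhabitant (bad_escape P_bad)).

Record state := State { sset : cset; scenter : nat -> bool; snodes : seq node }.

Definition stage_inv (i : nat) (st : state) :=
  [/\ nonempty_perfect (sset st), sset st `<=` P, sset st `<=` ball (scenter st) i,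
      sset st (scenter st) &
      size (snodes st) = i.+1 /\ forall a, a <= i -> sset st `<=` nset (nth root (snodes st) a)].

(* Stage [i] puts challenge [n] to node [a], where [i] codes [(a, n)]: every node meets
   every challenge. *)
Definition stage_step (i : nat) (st st' : state) :=
  let (a, n) := Cantor.of_nat i in
  exists v, [/\ snodes st' = rcons (snodes st) v, answers (nth root (snodes st) a) n v
               & sset st' `<=` sset st].

Lemma stage_step_exists i st :
  stage_inv i st -> exists st', stage_step i st st' /\ stage_inv i.+1 st'.
Proof.
case=> Hperf HP Hball Hc [Hsize Hnodes]; rewrite /stage_step.
have := cantor_fst_le i; case: (Cantor.of_nat i) => a n /= Ha.
have [v [Hv [HvR Hv_perf]]] := answer_exists n (conj (Hnodes a Ha) Hperf).
have [c Hc'] := Hv_perf.2.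
exists (State (cyl (nset v) c i.+1) c (rcons (snodes st) v)); split.
  by exists v; split => // f [/HvR].
split => //=.
- exact: nonempty_perfect_cyl.
- by move=> f [/HvR /HP].
- by move=> f [].
- split; first by rewrite size_rcons Hsize.
  move=> b Hb; rewrite nth_rcons Hsize; case: ltnP => [Hbi|Hib].
    by move=> f [/HvR Hf _]; apply: (Hnodes b) Hf; rewrite -ltnS.
  have -> : b = i.+1 by apply/eqP; rewrite eqn_leq Hb Hib.
  by rewrite eqxx => f [].
Qed.

Definition st0 : state := State P (epsilon (inhabits xpred0) P) [:: root].

Lemma stage_inv0 : stage_inv 0 st0.
Proof.
split => //=; first exact: epsilon_spec P_perfect.2.
by split => // a; rewrite leqn0 => /eqP -> f.
Qed.

Fixpoint stage (i : nat) : state :=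
  if i is i'.+1 then
    epsilon (inhabits st0) (fun st => stage_step i' (stage i') st /\ stage_inv i'.+1 st)
  else st0.

Lemma stage_invP i : stage_inv i (stage i).
Proof.
elim: i => [|i IH]; first exact: stage_inv0.
by have [] := epsilon_spec (inhabits st0) _ (stage_step_exists IH).
Qed.

Lemma stage_stepP i : stage_step i (stage i) (stage i.+1).
Proof. by have [] := epsilon_spec (inhabits st0) _ (stage_step_exists (stage_invP i)). Qed.

Lemma stage_succ i :
  sset (stage i.+1) `<=` sset (stage i) /\
  exists v, snodes (stage i.+1) = rcons (snodes (stage i)) v.
Proof.
have := stage_stepP i; rewrite /stage_step; case: Cantor.of_nat => a n [v [Hv _ Hsub]].
by split => //; exists v.
Qed.

Lemma sset_stage_mono i j : i <= j -> sset (stage j) `<=` sset (stage i).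
Proof.
move/subnKC <-; elim: (j - i) => [|d IH]; first by rewrite addn0.
by rewrite addnS; apply: subc_trans IH; case: (stage_succ (i + d)).
Qed.

Lemma nth_snodes_stable a i j : a <= i -> i <= j ->
  nth root (snodes (stage j)) a = nth root (snodes (stage i)) a.
Proof.
move=> Hai /subnKC <-; elim: (j - i) => [|d IH]; first by rewrite addn0.
rewrite addnS; have [_ [v ->]] := stage_succ (i + d).
have [_ _ _ _ [Hsize _]] := stage_invP (i + d).
by rewrite nth_rcons Hsize ltnS (leq_trans Hai (leq_addr _ _)).
Qed.

Definition node_at (a : nat) : node := nth root (snodes (stage a)) a.

Lemma node_stage a j : a <= j -> sset (stage j) `<=` nset (node_at a).
Proof.
move=> Haj; have [_ _ _ _ [_ Hnodes]] := stage_invP j.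
by rewrite /node_at -(nth_snodes_stable (leqnn a) Haj); exact: Hnodes.
Qed.

Lemma node_answers a n : answers (node_at a) n (node_at (Cantor.to_nat (a, n)).+1).
Proof.
set i := Cantor.to_nat (a, n).
have := stage_stepP i; rewrite /stage_step Cantor.cancel_of_to => -[v [Hv Hans _]].
have [_ _ _ _ [Hsize _]] := stage_invP i.
rewrite /node_at Hv nth_rcons Hsize ltnn eqxx.
by rewrite -(nth_snodes_stable (leqnn a) (cantor_to_nat_ge a n)).
Qed.

Definition f0 : nat -> bool := fun k => scenter (stage k.+1) k.

Lemma f0_in i : sset (stage i) f0.
Proof.
have [[[Hclosed _] _] _ _ _ _] := stage_invP i.
apply: Hclosed => m; exists (scenter (stage (maxn i m))); split.
  by apply: (sset_stage_mono (leq_maxl i m)); case: (stage_invP (maxn i m)).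
move=> k Hk; have [_ _ Hball _ _] := stage_invP k.+1.
have Hin : sset (stage k.+1) (scenter (stage (maxn i m))).
  apply: (sset_stage_mono (_ : k.+1 <= maxn i m)); first exact: leq_trans Hk (leq_maxr i m).
  by case: (stage_invP (maxn i m)).
exact: Hball _ Hin k (ltnSn k).
Qed.

Section Branch.
Variable sg : strategyI F.

Fixpoint branch (k : nat) : nat :=
  if k is k'.+1 then (Cantor.to_nat (branch k', sg (npos (node_at (branch k'))))).+1 else 0.

Definition run (k : nat) : node := node_at (branch k).
Definition play (k : nat) : E := last 0%R (npos (run k.+1)).

Lemma run_answers k : answers (run k) (sg (npos (run k))) (run k.+1).
Proof. exact: node_answers. Qed.

Lemma npos_run k : npos (run k) = mkseq play k.
Proof.
elim: k => [//|k IH]; have [y [Hy _ _ _ _]] := run_answers k.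
by rewrite mkseqS -IH /play Hy last_rcons.
Qed.

Lemma play_step k : [/\ legal X (mkseq play k) (play k), above (sg (mkseq play k)) (play k),
  prefix (ncode (run k)) (ncode (run k.+1)) &
  if ncode (run k.+1) == ncode (run k) then child (run k) (run k.+1)
  else bad X g (nset (run k.+1)) (npos (run k.+1)) (ncode (run k.+1))].
Proof.
have [y [Hy Hlegal Habove Hprefix Hif]] := run_answers k.
have -> : play k = y by rewrite /play Hy last_rcons.
by rewrite -npos_run.
Qed.

Lemma play_outcomes : outcomes X sg play.
Proof.
split=> [n|k]; last by have [[_ Hspan _] Habove _ _] := play_step k.
have [[Hn0 _ _] _ _ _] := play_step n; split => //.
have [[_ _ Hsupp] _ _ _] := play_step n.+1.
by move: Hsupp; rewrite size_mkseq mkseqS last_rcons; apply.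
Qed.

Lemma code_prefix k k' : k <= k' -> prefix (ncode (run k)) (ncode (run k')).
Proof.
move/subnKC <-; elim: (k' - k) => [|d IH]; first by rewrite addn0 prefix_refl.
by rewrite addnS; apply: prefix_trans IH _; case: (play_step (k + d)).
Qed.

Lemma code_grows k0 : exists2 k, k0 <= k & ncode (run k.+1) != ncode (run k).
Proof.
apply: NNPP => Hno; apply: (@no_infinite_descent (fun j => run (k0 + j))) => j /=.
have [_ _ _] := play_step (k0 + j); rewrite addnS; case: eqP => // Hne _.
by case: Hno; exists (k0 + j); [exact: leq_addr | apply/eqP].
Qed.

Lemma code_unbounded m : exists k, m <= size (ncode (run k)).
Proof.
elim: m => [|m [k Hk]]; first by exists 0.
have [k' Hkk' Hgrow] := code_grows k; exists k'.+1.
case/prefixP: (code_prefix (leqnSn k')) => s Es.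
have : size (ncode (run k')) < size (ncode (run k'.+1)).
  rewrite Es size_cat -[X in X < _]addn0 ltn_add2l lt0n size_eq0.
  by apply: contra_neq Hgrow => Hs; rewrite Es Hs cats0.
by apply: leq_ltn_trans; apply: leq_trans Hk (size_prefix (code_prefix Hkk')).
Qed.

Lemma bad_run i m : exists k, [/\ i <= k, m <= size (ncode (run k.+1)) &
  bad X g (nset (run k.+1)) (npos (run k.+1)) (ncode (run k.+1))].
Proof.
have [k1 Hk1] := code_unbounded m; have [k Hk Hgrow] := code_grows (maxn i k1).
exists k; split; first exact: leq_trans (leq_maxl _ _) Hk.
  by apply: leq_trans Hk1 (size_prefix (code_prefix _)); lia.
by have [_ _ _] := play_step k; rewrite (negbTE Hgrow).
Qed.

Definition witness (i : nat) : nat := nth 0 (ncode (run (ex_minn (code_unbounded i.+1)))) i.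

Lemma nth_code k i : i < size (ncode (run k)) -> nth 0 (ncode (run k)) i = witness i.
Proof.
rewrite /witness; case: ex_minnP => K HK _ Hk.
have [Hle | Hlt] := leqP k K.
  by have /prefixP [s ->] := code_prefix Hle; rewrite nth_cat Hk.
by have /prefixP [s ->] := code_prefix (ltnW Hlt); rewrite nth_cat HK.
Qed.

Lemma witness_image : g witness = (f0, play).
Proof.
suff Hi i : (g witness).1 i = f0 i /\ (g witness).2 i = play i.
  by case E: (g witness) => [a b]; congr (_, _); apply: functional_extensionality => i;
    have := Hi i; rewrite E => -[].
have [m Hm] := g_cont witness i.+1.
have [k [Hik Hmk Hbad]] := bad_run i.+1 m.
set j := maxn (branch k.+1) i.+1.
have Hj : perfect_sub (sset (stage j)) (nset (run k.+1)).
  by split; [exact: node_stage (leq_maxl _ _) | case: (stage_invP j)].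
have [f' [Y' [x' [Hf' HY' Hrev Hgx']]]] := bad_witness (fun _ => 0) Hbad Hj.
have Hx' : agree m x' witness.
  move=> i' Hi'; have Hi'k := leq_trans Hi' Hmk.
  by rewrite -(nth_code Hi'k) -Hrev nth_reveal // -size_reveal Hrev.
have [H1 H2] := Hm x' Hx'; rewrite Hgx' /= in H1 H2.
split.
- rewrite -H1 //; have [_ _ Hball _ _] := stage_invP j.
  have Hij : i < j by apply: leq_trans (leq_maxr _ _).
  by rewrite (Hball _ Hf' i Hij) (Hball _ (f0_in j) i Hij).
- rewrite -H2 //; have [Hpos _ _ _] := HY'.
  rewrite npos_run size_mkseq in Hpos.
  by rewrite -(nth_mkseq 0%R Y' (ltnW (leq_ltn_trans Hik (ltnSn k)))) Hpos nth_mkseq //; lia.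
Qed.
End Branch.

Lemma bad_root_defeats : exists2 f, P f & forall sg, exists Y x, outcomes X sg Y /\ g x = (f, Y).
Proof.
exists f0; first by have [_ HP _ _ _] := stage_invP 0; exact: HP (f0_in 0).
by move=> sg; exists (play sg), (witness sg); split; [exact: play_outcomes | exact: witness_image].
Qed.
End Defeat.

Lemma outcome_from_nil (F : countFieldType) (X : nat -> {poly F}) sg Y :
  outcomes X sg Y -> outcome_from X sg [::] Y.
Proof. by case=> HY Hk; split => // k; case: (Hk k). Qed.

Theorem lemma5p2 (F : countFieldType)
  (A : (nat -> bool) * (nat -> {poly F}) -> Prop)
  (P : (nat -> bool) -> Prop) (X : nat -> {poly F}) :
  (forall f Y, A (f, Y) -> block_seq Y) ->
  analytic A ->
  (exists f, P f) -> perfect_cantor P ->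
  block_seq X ->
  (forall f, P f -> exists sigma : strategyI F,
       plays_out_of X sigma (fun Y => A (f, Y))) ->
  exists (Q : (nat -> bool) -> Prop) (sigma : strategyI F),
    (forall f, Q f -> P f) /\ (exists f, Q f) /\ perfect_cantor Q /\
    forall f Y, Q f -> outcomes X sigma Y -> ~ A (f, Y).
Proof.
move=> _ [A_empty | [g [g_cont HA]]] P_ne P_perf _ P_out.
  by exists P, (fun _ => 0); do !split => // f Y _ _; exact: A_empty.
apply: NNPP => Hno.
have P_bad : bad X g P [::] [::].
  move=> Q sg [HQP [HQ HQne]] Hkill; apply: Hno; exists Q, sg; do !split => //.
  move=> f Y Hf HY /HA [x Hx]; exact: Hkill f Y x Hf (outcome_from_nil HY) (reveal0 x) Hx.
have [f Pf Hdefeat] := bad_root_defeats (conj P_perf P_ne) g_cont P_bad.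
have [sg Hsg] := P_out f Pf; have [Y [x [HY Hx]]] := Hdefeat sg.
by apply: (Hsg Y HY); apply/HA; exists x.
Qed.
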